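(* For every $N\ge1$, the symmetric matrix $$\bar A*\hat{\mathcal{H}}'+\frac{1}{\max(N-1,1)}\big(N\bar A'-\bar A\big)*(\hat{\mathcal{H}}''-\hat{\mathcal{H}}')$$ is positive semi-definite.
   Context: Fix layer widths $C_0,\dots,C_L$ and a mini-batch size $N\ge1$. For $l=1,\dots,L$, let $\bar a_{l-1}\in\mathbb{R}^{(C_{l-1}+1)\times N}$ be square-integrable random matrices (activations with a row of ones appended). For each $n\in\{1,\dots,N\}$ and $l\in\{1,\dots,L\}$, let $g^{(n)}_l\in\mathbb{R}^{C_l\times N}$ be square-integrable random matrices. Here $(g^{(n)}_l)_{a,m}$ stands for the gradient $\partial\mathcal{L}_n/\partial(h_l)_{a,m}$ of the $n$-th example's loss with respect to the pre-activation entry $(a,m)$ of layer $l$. $\mathbb{E}$ denotes expectation, and $\mathbb{E}_n[\cdot]=\frac1N\sum_{n=1}^N[\cdot]$. Define block matrices, with $\{M\}_{l,l'}$ denoting block $(l,l')$, by: - $(\{\bar A\}_{l,l'})_{b,d}=\mathbb{E}\big[\mathbb{E}_n[(\bar a_{l-1})_{b,n}(\bar a_{l'-1})_{d,n}]\big]$; - $(\{\bar A'\}_{l,l'})_{b,d}=\mathbb{E}\big[\mathbb{E}_n[(\bar a_{l-1})_{b,n}]\,\mathbb{E}_n[(\bar a_{l'-1})_{d,n}]\big]$; - $(\{\hat{\mathcal{H}}'\}_{l,l'})_{a,c}=\mathbb{E}\big[\mathbb{E}_n[\sum_{m}(g^{(n)}_l)_{a,m}(g^{(n)}_{l'})_{c,m}]\big]$;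 - $(\{\hat{\mathcal{H}}''\}_{l,l'})_{a,c}=\mathbb{E}\big[\mathbb{E}_n[(\sum_{m}(g^{(n)}_l)_{a,m})(\sum_{m}(g^{(n)}_{l'})_{c,m})]\big]$. For block matrices $P,Q$ with the same block layout, the Khatri–Rao product $P*Q$ is the block matrix with blocks $\{P*Q\}_{l,l'}=\{P\}_{l,l'}\otimes\{Q\}_{l,l'}$, where $\otimes$ is the Kronecker product. *)

From HB Require Import structures.
From mathcomp Require Import all_boot all_order all_algebra.
From mathcomp Require Import all_classical all_reals all_analysis.
From mathcomp.real_closed Require Export mxtens.
Set Implicit Arguments. Unset Strict Implicit. Unset Printing Implicit Defensive.
Import Order.TTheory GRing.Theory Num.Theory.
Local Open Scope ring_scope.

Section Defs.
Context {d : measure_display} {T : measurableType d} {R : realType}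
  (P : probability T R).

Definition Ex (f : T -> R) : R := Rintegral P setT f.

Definition sq_integrable (f : T -> R) : Prop :=
  measurable_fun setT f /\ P.-integrable setT (fun w => (f w ^+ 2)%:E).

Definition sq_integrable_mx (m n : nat) (X : T -> 'M[R]_(m, n)) : Prop :=
  forall i j, sq_integrable (fun w => X w i j).

(* Layers are indexed by l : 'I_L, standing for the paper's layer l+1.
   C : nat -> nat gives the widths C_0, ..., C_L.
   a l : activation abar_{l} (paper: abar_{(l+1)-1}), size (C l + 1) x N.
   g n l : gradient g^{(n)}_{l+1}, size C (l+1) x N. *)
Variables (L N : nat) (C : nat -> nat)
  (a : forall l : 'I_L, T -> 'M[R]_(C l + 1, N))
  (g : 'I_N -> forall l : 'I_L, T -> 'M[R]_(C l.+1, N)).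

Definition EnN (F : 'I_N -> R) : R := N%:R^-1 * \sum_(n < N) F n.

Definition Abar_blk (l l' : 'I_L) : 'M[R]_(C l + 1, C l' + 1) :=
  \matrix_(b, d') Ex (fun w => EnN (fun n => a l w b n * a l' w d' n)).

Definition Abar'_blk (l l' : 'I_L) : 'M[R]_(C l + 1, C l' + 1) :=
  \matrix_(b, d') Ex (fun w => EnN (fun n => a l w b n) * EnN (fun n => a l' w d' n)).

Definition H'_blk (l l' : 'I_L) : 'M[R]_(C l.+1, C l'.+1) :=
  \matrix_(i, c) Ex (fun w => EnN (fun n => \sum_(m < N) g n l w i m * g n l' w c m)).

Definition H''_blk (l l' : 'I_L) : 'M[R]_(C l.+1, C l'.+1) :=
  \matrix_(i, c) Ex (fun w => EnN (fun n =>
     (\sum_(m < N) g n l w i m) * (\sum_(m < N) g n l' w c m))).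

Definition khatri_rao (p q : 'I_L -> nat)
  (X : forall l l' : 'I_L, 'M[R]_(p l, p l'))
  (Y : forall l l' : 'I_L, 'M[R]_(q l, q l')) :
  'M[R]_(\sum_(l < L) (p l * q l)%N, \sum_(l < L) (p l * q l)%N) :=
  \mxblock_(l < L, l' < L) tensmx (X l l') (Y l l').

Definition theorem3_matrix :=
  khatri_rao Abar_blk H'_blk
  + (maxn (N - 1) 1)%:R^-1 *:
    khatri_rao (fun l l' => N%:R *: Abar'_blk l l' - Abar_blk l l')
               (fun l l' => H''_blk l l' - H'_blk l l').
End Defs.

Definition psd (R : realType) (n : nat) (M : 'M[R]_n) : Prop :=
  M^T = M /\ forall x : 'cV[R]_n, 0 <= (x^T *m M *m x) 0 0.

From HB Require Import structures.
From mathcomp Require Import all_boot all_order all_algebra.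
From mathcomp Require Import all_classical all_reals all_analysis.
From mathcomp.real_closed Require Import mxtens.
From mathcomp Require Import ring.
Set Implicit Arguments. Unset Strict Implicit. Unset Printing Implicit Defensive.
Import Order.TTheory GRing.Theory Num.Theory.
Local Open Scope ring_scope.

(* A row/column of the Khatri-Rao matrix is an index i = (layer, activation
   row b, gradient row a), and every entry is built from expectations of
   empirical second moments.  Each such moment is a weighted Gram kernel
     Gram c phi i j = E[c * sum_k phi_i(k) phi_j(k)]
   of square-integrable random feature vectors phi_i, and the proof rests on:
   - the Schur product theorem for Gram kernels (Gram_schur): the entrywise
     product of two Gram kernels has a nonnegative quadratic form, because the
     expectation can be pulled out of the quadratic form;
   - centering: with batch-centered activations and position-centered
     per-example gradients, Abar = Cov_a + Abar' and N H' - H'' = (N - 1) Cov_g,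
     so for N > 1 every entry equals Cov_a * Cov_g + Abar' * H'' (entry_decomp),
     while for N = 1 the correction term vanishes and it is Abar * H'
     (entry_single).  Either way it is a sum of Schur products of Gram kernels. *)

Section QuadraticForms.
Variable R : realDomainType.

Definition qform (I : finType) (x : I -> R) (M : I -> I -> R) : R :=
  \sum_i \sum_j x i * x j * M i j.

Lemma qformD (I : finType) (x : I -> R) (M M' : I -> I -> R) :
  qform x (fun i j => M i j + M' i j) = qform x M + qform x M'.
Proof.
rewrite /qform -big_split; apply: eq_bigr => i _.
by rewrite -big_split; apply: eq_bigr => j _; rewrite mulrDr.
Qed.

Lemma qform_ones (I : finType) (x : I -> R) :
  qform x (fun _ _ => 1) = (\sum_i x i) ^+ 2.
Proof.
rewrite /qform expr2 mulr_suml; apply: eq_bigr => i _.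
by rewrite mulr_sumr; apply: eq_bigr => j _; rewrite mulr1.
Qed.

Lemma qform_hadamard (I K : finType) (b : I -> K -> R) (M : I -> I -> R) (x : I -> R) :
  qform x (fun i j => (\sum_k b i k * b j k) * M i j) =
  \sum_k qform (fun i => x i * b i k) M.
Proof.
transitivity (\sum_i \sum_j \sum_k x i * b i k * (x j * b j k) * M i j).
  apply: eq_bigr => i _; apply: eq_bigr => j _.
  by rewrite mulr_suml mulr_sumr; apply: eq_bigr => k _; ring.
by under eq_bigr do rewrite exchange_big /=; rewrite exchange_big.
Qed.

Lemma qform_hadamard_ge0 (I K : finType) (b : I -> K -> R) (M : I -> I -> R) (x : I -> R) :
  (forall y, 0 <= qform y M) ->
  0 <= qform x (fun i j => (\sum_k b i k * b j k) * M i j).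
Proof. by move=> M_psd; rewrite qform_hadamard; apply: sumr_ge0. Qed.

End QuadraticForms.

Lemma sum_centered_prod (R : comNzRingType) (n : nat) (A B : 'I_n -> R) (x y : R) :
  \sum_k (A k - x) * (B k - y) =
  \sum_k A k * B k - x * \sum_k B k - y * \sum_k A k + n%:R * x * y.
Proof.
transitivity (\sum_k (A k * B k + (- (x * B k)) + (- (y * A k)) + x * y)).
  by apply: eq_bigr => k _; ring.
rewrite !big_split /= !sumrN -!mulr_sumr sumr_const card_ord mulr_natl; ring.
Qed.

Lemma natr_pred_neq0 (R : numDomainType) (N : nat) : (1 < N)%N -> N%:R - 1 != 0 :> R.
Proof. by move=> N_gt1; rewrite subr_eq0 -[1 : R]/(1%:R) eqr_nat gtn_eqF. Qed.

Lemma maxn_pred_natr (R : numDomainType) (N : nat) : (1 < N)%N ->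
  (maxn (N - 1) 1)%:R = N%:R - 1 :> R.
Proof.
move=> N_gt1; rewrite (maxn_idPl _); last by rewrite leq_subRL ?addn1 // ltnW.
by rewrite natrB // ltnW.
Qed.

Lemma centering_identity (R : fieldType) (n X Y X' Y'' D Z : R) : n - 1 != 0 ->
  X = D + X' -> n * Y - Y'' = (n - 1) * Z ->
  X * Y + (n - 1)^-1 * ((n * X' - X) * (Y'' - Y)) = D * Z + X' * Y''.
Proof.
move=> n1_neq0 -> hY; have -> : Y'' = n * Y - (n - 1) * Z by rewrite -hY; ring.
by field.
Qed.

Lemma psd_kernel (R : realType) (n : nat) (k : 'I_n -> 'I_n -> R) :
  (forall i j, k i j = k j i) -> (forall x, 0 <= qform x k) ->
  psd (\matrix_(i, j) k i j).
Proof.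
move=> k_sym k_ge0; split; first by apply/matrixP => i j; rewrite !mxE k_sym.
move=> x; suff -> : (x^T *m (\matrix_(i, j) k i j) *m x) 0 0 = qform (fun i => x i 0) k.
  exact: k_ge0.
rewrite mxE; under eq_bigr do rewrite mxE mulr_suml.
rewrite exchange_big /=; apply: eq_bigr => i _; apply: eq_bigr => j _.
by rewrite !mxE; ring.
Qed.

Lemma sum_single (V : nmodType) (N : nat) (n0 : 'I_N) (F : 'I_N -> V) :
  N = 1%N -> \sum_n F n = F n0.
Proof.
move=> N1; apply: big_pred1 => n /=; apply/esym/eqP/val_inj.
have n_lt1 : (val n < 1)%N by rewrite -N1; exact: ltn_ord.
have n0_lt1 : (val n0 < 1)%N by rewrite -N1; exact: ltn_ord.
by move: n_lt1 n0_lt1; rewrite !ltnS !leqn0 => /eqP -> /eqP ->.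
Qed.

Lemma EnN_single (R : realType) (N : nat) (n0 : 'I_N) (F : 'I_N -> R) :
  N = 1%N -> EnN F = F n0.
Proof. by move=> N1; rewrite /EnN (sum_single n0 _ N1) N1 invr1 mul1r. Qed.

Section Expectation.
Context {d : measure_display} {T : measurableType d} {R : realType}
  (P : probability T R).

Section Lspace.
Variables (p : \bar R) (p1 : (1 <= p)%E).

Lemma Lfun_lin (c : R) (f g : T -> R) : f \in Lfun P p -> g \in Lfun P p ->
  (fun w => c * f w + g w) \in Lfun P p.
Proof. by have [_ lin] := Lfun_submod_closed P p1; exact: lin. Qed.

Lemma Lfun_scale (c : R) (f : T -> R) : f \in Lfun P p -> (fun w => c * f w) \in Lfun P p.
Proof.
move=> lf; have [lf0 _] := Lfun_submod_closed P p1.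
by have := Lfun_lin c lf lf0; under eq_fun do rewrite addr0.
Qed.

Lemma Lfun_sub (f g : T -> R) : f \in Lfun P p -> g \in Lfun P p ->
  (fun w => f w - g w) \in Lfun P p.
Proof.
move=> lf lg; have := Lfun_lin (-1) lg lf.
by under eq_fun do rewrite mulN1r addrC.
Qed.

Lemma Lfun_sum (I : Type) (r : seq I) (F : I -> T -> R) :
  (forall i, F i \in Lfun P p) -> (fun w => \sum_(i <- r) F i w) \in Lfun P p.
Proof.
move=> lF; elim: r => [|i r IH].
  have [lf0 _] := Lfun_submod_closed P p1.
  by under eq_fun do rewrite big_nil.
suff -> : (fun w => \sum_(j <- i :: r) F j w) = (fun w => 1 * F i w + \sum_(j <- r) F j w)
  by exact: Lfun_lin.
by apply/funext => w; rewrite big_cons mul1r.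
Qed.

End Lspace.

Lemma one_le_two : (1 <= 2%:E :> \bar R)%E.
Proof. by rewrite lee_fin ler1n. Qed.

Lemma sq_integrable_L2 (f : T -> R) : sq_integrable P f -> f \in Lfun P 2%:E.
Proof.
move=> [mf /integrableP [_ sq_fin]].
apply/andP; split; first by rewrite inE.
rewrite inE /= /finite_norm unlock /Lnorm; apply: poweR_lty.
suff -> : (fun x => `|(EFin \o f) x| `^ 2)%E = (fun x => `|(f x ^+ 2)%:E|)%E by [].
apply/funext => x /=; congr (_%:E).
by rewrite -[2]/(2%:R) powR_mulrn // real_normK ?num_real // ger0_norm // sqr_ge0.
Qed.

Lemma L1_integrable (f : T -> R) : f \in Lfun P 1 -> P.-integrable setT (EFin \o f).
Proof. by move/Lfun1_integrable. Qed.

Lemma ExD (f g : T -> R) : f \in Lfun P 1 -> g \in Lfun P 1 ->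
  Ex P (fun w => f w + g w) = Ex P f + Ex P g.
Proof. by move=> /L1_integrable f1 /L1_integrable g1; rewrite /Ex RintegralD. Qed.

Lemma ExB (f g : T -> R) : f \in Lfun P 1 -> g \in Lfun P 1 ->
  Ex P (fun w => f w - g w) = Ex P f - Ex P g.
Proof. by move=> /L1_integrable f1 /L1_integrable g1; rewrite /Ex RintegralB. Qed.

Lemma ExZ (c : R) (f : T -> R) : f \in Lfun P 1 -> Ex P (fun w => c * f w) = c * Ex P f.
Proof. by move=> /L1_integrable f1; rewrite /Ex RintegralZl. Qed.

Lemma Ex_sum (I : Type) (r : seq I) (F : I -> T -> R) : (forall i, F i \in Lfun P 1) ->
  Ex P (fun w => \sum_(i <- r) F i w) = \sum_(i <- r) Ex P (F i).
Proof.
move=> F1; elim: r => [|i r IH].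
  by rewrite big_nil /Ex; under eq_fun do rewrite big_nil; rewrite Rintegral_cst // mul0r.
rewrite big_cons -IH -ExD //; last exact: Lfun_sum.
by congr (Ex P _); apply/funext => w; rewrite big_cons.
Qed.

Section Gram.
Variable I : finType.

Definition Gram (K : finType) (c : R) (phi : I -> T -> K -> R) (i j : I) : R :=
  Ex P (fun w => c * \sum_k phi i w k * phi j w k).

Definition L2_features (K : finType) (phi : I -> T -> K -> R) : Prop :=
  forall i k, (fun w => phi i w k) \in Lfun P 2%:E.

Lemma Gram_sym (K : finType) (c : R) (phi : I -> T -> K -> R) (i j : I) :
  Gram c phi i j = Gram c phi j i.
Proof.
by congr (Ex P _); apply/funext => w; congr (_ * _); apply: eq_bigr => k _; rewrite mulrC.
Qed.

(* By Hoelder, the integrand of a Gram kernel of L^2 features is in L^1. *)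
Lemma Gram_integrand_L1 (K : finType) (c : R) (phi : I -> T -> K -> R) (i j : I) :
  L2_features phi ->
  (fun w => c * \sum_k phi i w k * phi j w k) \in Lfun P 1.
Proof.
move=> phi2; apply: Lfun_scale => //; apply: Lfun_sum => // k.
exact: Lfun2_mul_Lfun1.
Qed.

Lemma Ex_sum2 (a : I -> I -> R) (F : I -> I -> T -> R) :
  (forall i j, F i j \in Lfun P 1) ->
  \sum_i \sum_j a i j * Ex P (F i j) = Ex P (fun w => \sum_i \sum_j a i j * F i j w).
Proof.
move=> F1; rewrite Ex_sum => [|i]; last by apply: Lfun_sum => // j; exact: Lfun_scale.
apply: eq_bigr => i _; rewrite Ex_sum => [|j]; last exact: Lfun_scale.
by apply: eq_bigr => j _; rewrite ExZ.
Qed.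

Lemma Gram_hadamard_ge0 (K : finType) (c : R) (phi : I -> T -> K -> R)
    (M : I -> I -> R) (x : I -> R) :
  0 <= c -> L2_features phi -> (forall y, 0 <= qform y M) ->
  0 <= qform x (fun i j => Gram c phi i j * M i j).
Proof.
move=> c_ge0 phi2 M_psd.
have -> : qform x (fun i j => Gram c phi i j * M i j) =
    \sum_i \sum_j (x i * x j * M i j) * Gram c phi i j.
  by apply: eq_bigr => i _; apply: eq_bigr => j _; ring.
rewrite /Gram Ex_sum2 => [|i j]; last exact: Gram_integrand_L1.
rewrite /Ex; apply: Rintegral_ge0 => w _.
have -> : \sum_i \sum_j x i * x j * M i j * (c * \sum_k phi i w k * phi j w k) =
    c * qform x (fun i j => (\sum_k phi i w k * phi j w k) * M i j).
  rewrite /qform mulr_sumr; apply: eq_bigr => i _.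
  by rewrite mulr_sumr; apply: eq_bigr => j _; ring.
by apply: mulr_ge0 => //; exact: qform_hadamard_ge0.
Qed.

Lemma Gram_psd (K : finType) (c : R) (phi : I -> T -> K -> R) (x : I -> R) :
  0 <= c -> L2_features phi -> 0 <= qform x (Gram c phi).
Proof.
move=> c_ge0 phi2.
have -> : Gram c phi = (fun i j => Gram c phi i j * 1).
  by apply/funext => i; apply/funext => j; rewrite mulr1.
by apply: Gram_hadamard_ge0 => // y; rewrite qform_ones sqr_ge0.
Qed.

Lemma Gram_schur (K K' : finType) (c c' : R) (phi : I -> T -> K -> R)
    (psi : I -> T -> K' -> R) (x : I -> R) :
  0 <= c -> 0 <= c' -> L2_features phi -> L2_features psi ->
  0 <= qform x (fun i j => Gram c phi i j * Gram c' psi i j).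
Proof.
move=> c_ge0 c'_ge0 phi2 psi2; apply: Gram_hadamard_ge0 => // y.
exact: Gram_psd.
Qed.

End Gram.

Section Entries.
Variables (I : finType) (N : nat) (act : I -> T -> 'I_N -> R)
  (grad : I -> 'I_N -> T -> 'I_N -> R).
Hypothesis act_L2 : forall i n, (fun w => act i w n) \in Lfun P 2%:E.
Hypothesis grad_L2 : forall i n m, (fun w => grad i n w m) \in Lfun P 2%:E.
Hypothesis N_gt0 : (0 < N)%N.

Definition A_entry (i j : I) : R := Ex P (fun w => EnN (fun n => act i w n * act j w n)).
Definition A'_entry (i j : I) : R := Ex P (fun w => EnN (act i w) * EnN (act j w)).
Definition H'_entry (i j : I) : R :=
  Ex P (fun w => EnN (fun n => \sum_m grad i n w m * grad j n w m)).
Definition H''_entry (i j : I) : R :=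
  Ex P (fun w => EnN (fun n => (\sum_m grad i n w m) * (\sum_m grad j n w m))).

Definition entry (i j : I) : R :=
  A_entry i j * H'_entry i j + (maxn (N - 1) 1)%:R^-1 *
  ((N%:R * A'_entry i j - A_entry i j) * (H''_entry i j - H'_entry i j)).

Definition grad_flat i w (p : 'I_N * 'I_N) : R := grad i p.1 w p.2.
Definition act_mean i w (_ : 'I_1) : R := EnN (act i w).
Definition grad_sum i w (n : 'I_N) : R := \sum_m grad i n w m.
Definition act_centered i w (n : 'I_N) : R := act i w n - EnN (act i w).
Definition grad_centered i w (p : 'I_N * 'I_N) : R :=
  grad i p.1 w p.2 - N%:R^-1 * grad_sum i w p.1.

Lemma act_features_L2 : L2_features act.
Proof. by move=> i n; exact: act_L2. Qed.
Lemma grad_flat_L2 : L2_features grad_flat.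
Proof. by move=> i [n m]; exact: grad_L2. Qed.
Lemma act_mean_L2 : L2_features act_mean.
Proof.
by move=> i k; apply: (Lfun_scale one_le_two); apply: (Lfun_sum one_le_two).
Qed.
Lemma grad_sum_L2 : L2_features grad_sum.
Proof. by move=> i n; apply: (Lfun_sum one_le_two). Qed.
Lemma act_centered_L2 : L2_features act_centered.
Proof.
move=> i n; apply: (Lfun_sub one_le_two) => //.
by apply: (Lfun_scale one_le_two); apply: (Lfun_sum one_le_two).
Qed.
Lemma grad_centered_L2 : L2_features grad_centered.
Proof.
move=> i [n m]; apply: (Lfun_sub one_le_two) => //.
by apply: (Lfun_scale one_le_two); apply: (Lfun_sum one_le_two).
Qed.

Lemma N_neq0 : N%:R != 0 :> R.
Proof. by rewrite pnatr_eq0 -lt0n. Qed.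

Lemma A_entry_Gram i j : A_entry i j = Gram N%:R^-1 act i j.
Proof. by []. Qed.
Lemma A'_entry_Gram i j : A'_entry i j = Gram 1 act_mean i j.
Proof. by congr (Ex P _); apply/funext => w; rewrite big_ord1 mul1r. Qed.
Lemma H'_entry_Gram i j : H'_entry i j = Gram N%:R^-1 grad_flat i j.
Proof. by congr (Ex P _); apply/funext => w; rewrite /EnN /grad_flat pair_bigA. Qed.
Lemma H''_entry_Gram i j : H''_entry i j = Gram N%:R^-1 grad_sum i j.
Proof. by []. Qed.

Lemma entry_sym i j : entry i j = entry j i.
Proof.
by rewrite /entry !A_entry_Gram !A'_entry_Gram !H'_entry_Gram !H''_entry_Gram
  !(Gram_sym _ _ i j).
Qed.

Lemma A_entry_centered i j : A_entry i j = Gram N%:R^-1 act_centered i j + A'_entry i j.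
Proof.
rewrite A'_entry_Gram /Gram -ExD;
  [|exact: Gram_integrand_L1 act_centered_L2|exact: Gram_integrand_L1 act_mean_L2].
congr (Ex P _); apply/funext => w.
rewrite big_ord1 mul1r /act_centered /act_mean /EnN sum_centered_prod.
by have := N_neq0; move: (N%:R : R) => r r_neq0; field.
Qed.

Lemma sum_grad_centered i j w n :
  \sum_m grad_centered i w (n, m) * grad_centered j w (n, m) =
  \sum_m grad i n w m * grad j n w m - N%:R^-1 * (grad_sum i w n * grad_sum j w n).
Proof.
rewrite /grad_centered /= sum_centered_prod /grad_sum.
by have := N_neq0; move: (N%:R : R) => r r_neq0; field.
Qed.

Lemma H_entry_centered i j : (1 < N)%N ->
  N%:R * H'_entry i j - H''_entry i j = (N%:R - 1) * Gram (N%:R - 1)^-1 grad_centered i j.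
Proof.
move=> N_gt1.
rewrite H'_entry_Gram /Gram -ExZ; last exact: Gram_integrand_L1 grad_flat_L2.
rewrite -ExB; [|by apply: Lfun_scale => //; exact: Gram_integrand_L1 grad_flat_L2
              |exact: Gram_integrand_L1 grad_sum_L2].
rewrite -ExZ; last exact: Gram_integrand_L1 grad_centered_L2.
congr (Ex P _); apply/funext => w.
rewrite (mulVKf (natr_pred_neq0 _ N_gt1)) (mulVKf N_neq0) /grad_flat /grad_centered.
rewrite -(pair_bigA _ (fun n m => grad i n w m * grad j n w m)).
rewrite -(pair_bigA _ (fun n m => (grad i n w m - N%:R^-1 * grad_sum i w n) *
                                  (grad j n w m - N%:R^-1 * grad_sum j w n))).
by rewrite /EnN mulr_sumr -sumrB; apply: eq_bigr => n _; rewrite -sum_grad_centered.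
Qed.

Lemma entry_single i j : N = 1%N ->
  entry i j = Gram N%:R^-1 act i j * Gram N%:R^-1 grad_flat i j.
Proof.
move=> N1; pose n0 := Ordinal N_gt0; rewrite /entry.
have -> : A'_entry i j = A_entry i j.
  by congr (Ex P _); apply/funext => w; rewrite !(EnN_single n0 _ N1).
have -> : H''_entry i j = H'_entry i j.
  by congr (Ex P _); apply/funext => w; rewrite !(EnN_single n0 _ N1) !(sum_single n0 _ N1).
by rewrite subrr !mulr0 addr0 H'_entry_Gram.
Qed.

Lemma entry_decomp i j : (1 < N)%N ->
  entry i j = Gram N%:R^-1 act_centered i j * Gram (N%:R - 1)^-1 grad_centered i j
            + Gram 1 act_mean i j * Gram N%:R^-1 grad_sum i j.
Proof.
move=> N_gt1; rewrite -A'_entry_Gram -H''_entry_Gram /entry maxn_pred_natr //.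
apply: centering_identity; first exact: natr_pred_neq0.
  exact: A_entry_centered.
exact: H_entry_centered.
Qed.

Lemma entry_psd (x : I -> R) : 0 <= qform x entry.
Proof.
have N_inv_ge0 : 0 <= N%:R^-1 :> R by rewrite invr_ge0 ler0n.
have [N1 | N_neq1] := eqVneq N 1%N.
  have -> : entry = (fun i j => Gram N%:R^-1 act i j * Gram N%:R^-1 grad_flat i j).
    by apply/funext => i; apply/funext => j; exact: entry_single.
  exact: Gram_schur act_features_L2 grad_flat_L2.
have N_gt1 : (1 < N)%N by rewrite ltn_neqAle eq_sym N_neq1 N_gt0.
have Nm1_inv_ge0 : 0 <= (N%:R - 1)^-1 :> R.
  by rewrite invr_ge0 subr_ge0 -[1 : R]/(1%:R) ler_nat ltnW.
have -> : entry = (fun i j =>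
    Gram N%:R^-1 act_centered i j * Gram (N%:R - 1)^-1 grad_centered i j
    + Gram 1 act_mean i j * Gram N%:R^-1 grad_sum i j).
  by apply/funext => i; apply/funext => j; exact: entry_decomp.
rewrite qformD; apply: addr_ge0.
  exact: Gram_schur act_centered_L2 grad_centered_L2.
exact: Gram_schur act_mean_L2 grad_sum_L2.
Qed.

End Entries.
End Expectation.

Theorem theorem3 (d : measure_display) (T : measurableType d) (R : realType)
  (P : probability T R) (L N : nat) (C : nat -> nat)
  (a : forall l : 'I_L, T -> 'M[R]_(C l + 1, N))
  (g : 'I_N -> forall l : 'I_L, T -> 'M[R]_(C l.+1, N)) :
  (0 < N)%N ->
  (forall l : 'I_L, sq_integrable_mx P (a l)) ->
  (forall (n : 'I_N) (l : 'I_L), sq_integrable_mx P (g n l)) ->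
  (forall (l : 'I_L) (w : T) (n : 'I_N), a l w (rshift (C l) ord0) n = 1) ->
  psd (theorem3_matrix P a g).
Proof.
move=> N_gt0 a_L2 g_L2 _.
(* A row/column index of the Khatri-Rao matrix is a layer l together with an
   index of the Kronecker block of layer l, i.e. a pair (b, i). *)
pose K := (\sum_(l < L) ((C l + 1) * C l.+1))%N.
pose layer (I : 'I_K) : 'I_L := tagnat.sig1 I.
pose act (I : 'I_K) w n := a (layer I) w (mxtens_unindex (tagnat.sig2 I)).1 n.
pose grad (I : 'I_K) n w m := g n (layer I) w (mxtens_unindex (tagnat.sig2 I)).2 m.
have -> : theorem3_matrix P a g = \matrix_(I, J) entry P act grad I J.
  by apply/matrixP => I J; rewrite /theorem3_matrix /khatri_rao !mxE.
apply: psd_kernel; first exact: entry_sym.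
by apply: entry_psd => // I *; apply: sq_integrable_L2; [exact: a_L2 | exact: g_L2].
Qed.
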